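(* Let $a,b,c$ be positive numbers with $a<b<c$ and $b-a<c_0<a$, where $c_0=c-\lfloor c/b\rfloor b$. Then $$\mathcal D_{a,b,c}=\Big(\mathcal S_{a,b,c}\cap([0,c_0+a-b)+a\mathbb Z)\cap(\mathcal S_{a,b,c}-\lfloor c/b\rfloor b)\Big)\cup\Big(\mathcal S_{a,b,c}\cap\bigcup_{\lambda\in b\mathbb Z\cap[b,(\lfloor c/b\rfloor-1)b]}(\mathcal S_{a,b,c}-\lambda)\Big).$$
   Context: For $a,b,c>0$ and $t\in\mathbb R$, $\mathbf M_{a,b,c}(t)=(\chi_{[0,c)}(t-\mu+\lambda))_{\mu\in a\mathbb Z,\lambda\in b\mathbb Z}$ is the infinite matrix with rows indexed by $a\mathbb Z$ and columns by $b\mathbb Z$, acting by $(\mathbf M_{a,b,c}(t)\mathbf x)(\mu)=\sum_{\lambda\in b\mathbb Z}\chi_{[0,c)}(t-\mu+\lambda)\mathbf x(\lambda)$. $\mathcal B_b$ is the set of vectors $(\mathbf x(\lambda))_{\lambda\in b\mathbb Z}$ with entries in $\{0,1\}$, and $\mathcal B_b^0=\{\mathbf x\in\mathcal B_b:\mathbf x(0)=1\}$. $\mathbf 1,\mathbf 2$ denote the vectors indexed by $a\mathbb Z$ with all entries $1$, resp. $2$. $\mathcal D_{a,b,c}=\{t:\mathbf M_{a,b,c}(t)\mathbf x=\mathbf 2\text{ for some }\mathbf x\in\mathcal B_b^0\}$, $\mathcal S_{a,b,c}=\{t:\mathbf M_{a,b,c}(t)\mathbf x=\mathbf 1\text{ for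 some }\mathbf x\in\mathcal B_b^0\}$. For $A\subset\mathbb R$, $A-r=\{x-r:x\in A\}$ and $A+a\mathbb Z=\{x+ak:x\in A,k\in\mathbb Z\}$. *)

From Stdlib Require Export Reals List ZArith.
Open Scope R_scope.

Definition in_Ico (c s : R) : Prop := 0 <= s /\ s < c.

(* A vector x in B_b: indexed by b*Z, entry x(b*j) encoded as x j : bool. *)
Definition card_eq (P : Z -> Prop) (n : nat) : Prop :=
  exists l : list Z, NoDup l /\ length l = n /\ (forall j, In j l <-> P j).

(* (M_{a,b,c}(t) x)(a*k) = sum_j chi_[0,c)(t - a k + b j) x(b j)
   = number of j with x j = true and t - a k + b j in [0,c).
   (This sum has finitely many nonzero terms since b > 0.)
   M x = n*1 (constant vector n) iff this count equals n for all k. *)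
Definition Mx_const (a b c t : R) (x : Z -> bool) (n : nat) : Prop :=
  forall k : Z,
    card_eq (fun j => x j = true /\ in_Ico c (t - a * IZR k + b * IZR j)) n.

(* D_{a,b,c}: some x in B_b^0 with M(t) x = 2. *)
Definition Dset (a b c : R) (t : R) : Prop :=
  exists x : Z -> bool, x 0%Z = true /\ Mx_const a b c t x 2.

Definition Sset (a b c : R) (t : R) : Prop :=
  exists x : Z -> bool, x 0%Z = true /\ Mx_const a b c t x 1.

From Stdlib Require Import Reals List ZArith Zwf Lra Lia.
Open Scope R_scope.

(* Write N = floor(c/b) and c = N b + c0 with b - a < c0 < a.  A vector x of
   B_b is a set of columns j (positions b j); row k of M(t) counts the columns
   in the window [a k - t, a k - t + c).

   1. Combinatorics on integer sets: if every window (a convex set of integers)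
      meets x in exactly two points, then the points of x of even rank and
      those of odd rank each meet every window exactly once.  Conversely the
      union of two disjoint solutions of M x = 1 solves M x = 2.
   2. Geometry of a solution of M x = 1: consecutive columns are N or N + 1
      apart, and which of the two occurs after column p depends only on t and
      p (it is N + 1 iff no row offset a k - t lies in (b p, b p + b - c0]).
      Hence two solutions sharing one column share all columns: in particular
      a solution through 0 and one avoiding 0 are disjoint.
   3. The theorem: for t in D, split a witness by parity; the even part is a
      solution through 0, and the first column q of the odd part (1 <= q <= N)
      gives the shifted solution.  q = N forces the long gap N + 1 after 0,
      which is the condition t in [0, c0 + a - b) + aZ.  Conversely the two
      solutions of the right-hand side are disjoint, so their union works. *)

Lemma card_eq_1 (P : Z -> Prop) :
  card_eq P 1 <-> exists j, P j /\ forall j', P j' -> j' = j.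
Proof.
  split.
  - intros [l [_ [Hlen Hin]]].
    destruct l as [|j [|j' l]]; simpl in Hlen; try discriminate.
    exists j; split.
    + apply Hin; simpl; auto.
    + intros j' Hj'. apply Hin in Hj'. simpl in Hj'. destruct Hj' as [E|[]]; auto.
  - intros [j [Hj Huniq]]. exists (j :: nil). split; [|split].
    + constructor; [simpl; auto | constructor].
    + reflexivity.
    + intros j'; simpl; split.
      * intros [E|[]]; subst; auto.
      * intros H; left; symmetry; auto.
Qed.

Lemma card_eq_2_inv (P : Z -> Prop) : card_eq P 2 ->
  exists p q, (p < q)%Z /\ P p /\ P q /\ forall r, P r -> r = p \/ r = q.
Proof.
  intros [l [Hnd [Hlen Hin]]].
  destruct l as [|p [|q [|r l]]]; simpl in Hlen; try discriminate.
  inversion Hnd as [|? ? Hpq]; subst.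
  assert (Hp : P p) by (apply Hin; simpl; auto).
  assert (Hq : P q) by (apply Hin; simpl; auto).
  assert (Hall : forall r, P r -> r = p \/ r = q).
  { intros r Hr. apply Hin in Hr. simpl in Hr. destruct Hr as [E|[E|[]]]; auto. }
  destruct (Z.lt_total p q) as [Hlt|[E|Hlt]].
  - exists p, q; auto.
  - subst; exfalso; apply Hpq; simpl; auto.
  - exists q, p. split; [lia|split; [|split]]; auto.
    intros r Hr; destruct (Hall r Hr); auto.
Qed.

Lemma card_eq_2_intro (P : Z -> Prop) p q : p <> q -> P p -> P q ->
  (forall r, P r -> r = p \/ r = q) -> card_eq P 2.
Proof.
  intros Hpq Hp Hq Hall. exists (p :: q :: nil). split; [|split].
  - constructor.
    + simpl. intros [E|[]]; auto.
    + constructor; [simpl; auto | constructor].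
  - reflexivity.
  - intros j; simpl; split.
    + intros [E|[E|[]]]; subst; auto.
    + intros H; destruct (Hall j H); auto.
Qed.

Fixpoint count_true (f : Z -> bool) (lo : Z) (n : nat) : nat :=
  match n with
  | O => O
  | S n' => ((if f lo then 1 else 0) + count_true f (lo + 1) n')%nat
  end.

Lemma count_true_snoc f n : forall lo,
  count_true f lo (S n) = (count_true f lo n + if f (lo + Z.of_nat n)%Z then 1 else 0)%nat.
Proof.
  induction n as [|n IH]; intros lo.
  - simpl. rewrite Z.add_0_r. lia.
  - change (count_true f lo (S (S n)))
      with ((if f lo then 1 else 0) + count_true f (lo + 1) (S n))%nat.
    rewrite IH. simpl.
    replace (lo + 1 + Z.of_nat n)%Z with (lo + Z.pos (Pos.of_succ_nat n))%Z by lia.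
    lia.
Qed.

Definition rank (f : Z -> bool) (j : Z) : Z :=
  if (0 <=? j)%Z then Z.of_nat (count_true f 0 (Z.to_nat j))
  else (- Z.of_nat (count_true f j (Z.to_nat (- j))))%Z.

Lemma rank_succ f j : rank f (j + 1) = (rank f j + if f j then 1 else 0)%Z.
Proof.
  unfold rank.
  destruct (Z_lt_le_dec j 0) as [Hj|Hj].
  - rewrite (proj2 (Z.leb_gt 0 j)) by lia.
    replace (Z.to_nat (- j)) with (S (Z.to_nat (- (j + 1)))) by lia.
    simpl count_true.
    destruct (Z.eq_dec j (-1)) as [->|Hj1].
    + simpl. destruct (f (-1)%Z); reflexivity.
    + rewrite (proj2 (Z.leb_gt 0 (j + 1))) by lia. destruct (f j); lia.
  - rewrite (proj2 (Z.leb_le 0 j)), (proj2 (Z.leb_le 0 (j + 1))) by lia.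
    replace (Z.to_nat (j + 1)) with (S (Z.to_nat j)) by lia.
    rewrite count_true_snoc, Z2Nat.id by lia. simpl Z.add. destruct (f j); lia.
Qed.

Definition consecutive (x : Z -> bool) (p q : Z) : Prop :=
  x p = true /\ x q = true /\ (p < q)%Z /\ forall r, (p < r < q)%Z -> x r = false.

Lemma rank_next x p q : consecutive x p q -> rank x q = (rank x p + 1)%Z.
Proof.
  intros (Hp & _ & Hpq & Hgap).
  assert (Hrun : forall n : nat, (p + 1 + Z.of_nat n <= q)%Z ->
            rank x (p + 1 + Z.of_nat n) = (rank x p + 1)%Z).
  { induction n as [|n IH]; intros Hn.
    - rewrite Z.add_0_r, rank_succ, Hp. reflexivity.
    - replace (p + 1 + Z.of_nat (S n))%Z with (p + 1 + Z.of_nat n + 1)%Z by lia.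
      rewrite rank_succ, Hgap, IH by lia. lia. }
  replace q with (p + 1 + Z.of_nat (Z.to_nat (q - p - 1)))%Z by lia.
  apply Hrun. lia.
Qed.

Lemma first_true_after (f : Z -> bool) lo hi : (lo < hi)%Z -> f hi = true ->
  exists q, (lo < q <= hi)%Z /\ f q = true /\ forall r, (lo < r < q)%Z -> f r = false.
Proof.
  intros Hlt Hhi.
  replace lo with (hi - Z.of_nat (S (Z.to_nat (hi - lo - 1))))%Z by lia.
  generalize (Z.to_nat (hi - lo - 1)). clear lo Hlt.
  induction n as [|n IH].
  - exists hi. split; [lia|split; auto]. intros; lia.
  - set (lo := (hi - Z.of_nat (S (S n)))%Z).
    destruct (f (lo + 1)%Z) eqn:E.
    + exists (lo + 1)%Z. split; [unfold lo; lia|split; auto]. intros; lia.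
    + destruct IH as (q & Hq & Hfq & Hbefore).
      exists q. split; [unfold lo in *; lia|split; auto].
      intros r Hr. destruct (Z.eq_dec r (lo + 1)) as [->|Hr1]; auto.
      apply Hbefore. unfold lo in *; lia.
Qed.

Lemma next_exists x p r : x p = true -> x r = true -> (p < r)%Z ->
  exists q, consecutive x p q /\ (q <= r)%Z.
Proof.
  intros Hp Hr Hpr.
  destruct (first_true_after x p r Hpr Hr) as (q & Hq & Hxq & Hbefore).
  exists q. repeat split; auto; lia.
Qed.

Lemma prev_exists x p r : x p = true -> x r = true -> (p < r)%Z ->
  exists q, consecutive x q r /\ (p <= q)%Z.
Proof.
  intros Hp Hr Hpr.
  destruct (first_true_after (fun j => x (- j)%Z) (- r) (- p))
    as (q & Hq & Hxq & Hbefore); [lia|rewrite Z.opp_involutive; auto|].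
  exists (- q)%Z. repeat split; auto; try lia.
  intros s Hs. rewrite <- (Z.opp_involutive s). apply Hbefore. lia.
Qed.

Definition parity_part (x : Z -> bool) (e : bool) (j : Z) : bool :=
  x j && Bool.eqb (Z.even (rank x j)) e.

(* Convex sets of integers: the windows of M(t) are of this kind. *)
Definition convex (W : Z -> Prop) : Prop :=
  forall p q r, W p -> W q -> (p <= r <= q)%Z -> W r.

(* If W meets x in exactly two points, these are consecutive in x, so exactly
   one of them has rank of parity e. *)
Lemma parity_part_split x W e : convex W ->
  card_eq (fun j => x j = true /\ W j) 2 ->
  card_eq (fun j => parity_part x e j = true /\ W j) 1.
Proof.
  intros Wconv Htwo.
  destruct (card_eq_2_inv _ Htwo) as (p & q & Hpq & [Hp Wp] & [Hq Wq] & Honly).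
  assert (Hcons : consecutive x p q).
  { repeat split; auto. intros r Hr. destruct (x r) eqn:Er; auto.
    destruct (Honly r) as [E|E]; try lia.
    split; auto. apply (Wconv p q); auto; lia. }
  assert (Hflip : Z.even (rank x q) = negb (Z.even (rank x p))).
  { rewrite (rank_next x p q Hcons), Z.even_add. destruct (Z.even (rank x p)); reflexivity. }
  apply card_eq_1. unfold parity_part.
  destruct (Bool.eqb (Z.even (rank x p)) e) eqn:Ep.
  - exists p. split; [rewrite Hp, Ep; auto|].
    intros j [Hj Wj]. apply andb_prop in Hj as [Hxj Hej].
    destruct (Honly j (conj Hxj Wj)) as [->| ->]; auto.
    rewrite Hflip in Hej. destruct (Z.even (rank x p)), e; discriminate.
  - exists q. split.
    + rewrite Hq, Hflip. split; auto. destruct (Z.even (rank x p)), e; auto; discriminate.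
    + intros j [Hj Wj]. apply andb_prop in Hj as [Hxj Hej].
      destruct (Honly j (conj Hxj Wj)) as [->| ->]; auto. congruence.
Qed.

Lemma Mx_const_parity_part a b c t x e : 0 < b ->
  Mx_const a b c t x 2 -> Mx_const a b c t (parity_part x e) 1.
Proof.
  intros hb Htwo k. apply parity_part_split; auto.
  intros p q r [Hp0 Hp1] [Hq0 Hq1] Hr.
  assert (IZR p <= IZR r <= IZR q) by (split; apply IZR_le; lia).
  split; nra.
Qed.

Lemma Mx_const_union a b c t x1 x2 :
  Mx_const a b c t x1 1 -> Mx_const a b c t x2 1 ->
  (forall j, x1 j = true -> x2 j = true -> False) ->
  Mx_const a b c t (fun j => orb (x1 j) (x2 j)) 2.
Proof.
  intros H1 H2 Hdisj k.
  destruct (proj1 (card_eq_1 _) (H1 k)) as (p & [Hp Wp] & Up).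
  destruct (proj1 (card_eq_1 _) (H2 k)) as (r & [Hr Wr] & Ur).
  apply (card_eq_2_intro _ p r).
  - intros ->; eauto.
  - rewrite Hp; split; auto.
  - rewrite Hr, Bool.orb_true_r; split; auto.
  - intros j [Hj Wj]. apply Bool.orb_true_iff in Hj as [Hj|Hj].
    + left; apply Up; split; auto.
    + right; apply Ur; split; auto.
Qed.

(* Translating t by b j0 re-indexes the columns by j0: t + b j0 lies in S
   iff some solution at t contains column j0. *)
Lemma Sset_shift a b c t j0 :
  Sset a b c (t + b * IZR j0) <-> exists y, Mx_const a b c t y 1 /\ y j0 = true.
Proof.
  split.
  - intros [x [Hx0 Hx]]. exists (fun j => x (j - j0)%Z). split.
    + intros k. destruct (proj1 (card_eq_1 _) (Hx k)) as (j & [Hj Wj] & Uj).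
      apply card_eq_1. exists (j + j0)%Z. split.
      * rewrite Z.add_simpl_r. split; auto. unfold in_Ico in *.
        rewrite plus_IZR in *. lra.
      * intros j' [Hj' Wj']. assert (j' - j0 = j)%Z as E; [|lia].
        apply Uj. split; auto. unfold in_Ico in *. rewrite minus_IZR in *. lra.
    + rewrite Z.sub_diag. auto.
  - intros [y [Hy Hyj0]]. exists (fun j => y (j + j0)%Z). split; auto.
    intros k. destruct (proj1 (card_eq_1 _) (Hy k)) as (j & [Hj Wj] & Uj).
    apply card_eq_1. exists (j - j0)%Z. split.
    + rewrite Z.sub_add. split; auto. unfold in_Ico in *. rewrite minus_IZR in *. lra.
    + intros j' [Hj' Wj']. assert (j' + j0 = j)%Z as E; [|lia].
      apply Uj. split; auto. unfold in_Ico in *. rewrite plus_IZR in *. lra.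
Qed.

Section Propagation.
Variables x y : Z -> bool.
Hypothesis y_next : forall p, y p = true -> exists q, consecutive y p q.
Hypothesis y_prev : forall q, y q = true -> exists p, consecutive y p q.
Hypothesis next_agree : forall p q q', consecutive x p q -> consecutive y p q' -> q = q'.
Hypothesis prev_agree : forall p p' q, consecutive x p q -> consecutive y p' q -> p = p'.

Lemma shared_point_propagates p : x p = true -> y p = true ->
  forall j, x j = true -> y j = true.
Proof.
  intros Hxp Hyp j. destruct (Z_le_gt_dec p j) as [Hpj|Hpj].
  - revert Hpj. induction j as [j IH] using (well_founded_ind (Zwf_well_founded p)).
    intros Hpj Hxj. destruct (Z.eq_dec p j) as [<-|Hne]; auto.
    destruct (prev_exists x p j Hxp Hxj) as (q & Hq & Hpq); [lia|].
    assert (Hyq : y q = true).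
    { apply IH; [split|..]; destruct Hq as (Hxq & _ & Hqj & _); auto; lia. }
    destruct (y_next q Hyq) as [q' Hq'].
    rewrite (next_agree q j q' Hq Hq'). apply Hq'.
  - induction j as [j IH] using (well_founded_ind (Zwf_up_well_founded p)).
    intros Hxj. destruct (next_exists x j p Hxj Hxp) as (s & Hs & Hsp); [lia|].
    assert (Hys : y s = true).
    { destruct (Z.eq_dec s p) as [->|Hne]; auto.
      destruct Hs as (_ & Hxs & Hjs & _). apply IH; [split|..]; auto; lia. }
    destruct (y_prev s Hys) as [j' Hj'].
    rewrite (prev_agree j j' s Hs Hj'). apply Hj'.
Qed.
End Propagation.

Section Geometry.
Variables (a b c c0 : R) (N : Z) (t : R).
Hypothesis ha : 0 < a.
Hypothesis hab : a < b.
Hypothesis hN : (1 <= N)%Z.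
Hypothesis hc : c = IZR N * b + c0.
Hypothesis hc0l : b - a < c0.
Hypothesis hc0r : c0 < a.

Definition solution (x : Z -> bool) : Prop := Mx_const a b c t x 1.

Definition window (k j : Z) : Prop := in_Ico c (t - a * IZR k + b * IZR j).

Lemma window_iff k j : window k j <-> a * IZR k - t <= b * IZR j < a * IZR k - t + c.
Proof. unfold window, in_Ico. split; intros; lra. Qed.

Lemma solution_hits x k : solution x -> exists j, x j = true /\ window k j.
Proof.
  intros Hx. destruct (proj1 (card_eq_1 _) (Hx k)) as (j & Hj & _). exists j; exact Hj.
Qed.

Lemma solution_unique x k p q : solution x -> x p = true -> x q = true ->
  window k p -> window k q -> p = q.
Proof.
  intros Hx Hp Hq Wp Wq. destruct (proj1 (card_eq_1 _) (Hx k)) as (j & _ & Uj).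
  rewrite (Uj p), (Uj q); auto.
Qed.

Lemma row_offset_dense alpha : exists k, alpha < a * IZR k - t <= alpha + a.
Proof.
  destruct (archimed ((alpha + t) / a)) as [Hup1 Hup2].
  exists (up ((alpha + t) / a)).
  assert (E : (alpha + t) / a * a = alpha + t) by (field; lra).
  split; nra.
Qed.

Definition no_row_offset (lo hi : R) : Prop := forall k, ~ (lo < a * IZR k - t <= hi).

Lemma no_row_offset_short lo mid hi :
  no_row_offset lo mid -> no_row_offset mid hi -> hi - lo < a.
Proof.
  intros Hlo Hhi. destruct (Rlt_le_dec (hi - lo) a) as [Hlt|Hge]; auto.
  destruct (row_offset_dense lo) as [k Hk]. exfalso.
  destruct (Rle_lt_dec (a * IZR k - t) mid); [apply (Hlo k) | apply (Hhi k)]; lra.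
Qed.

Lemma scale_le z w : (z <= w)%Z -> b * IZR z <= b * IZR w.
Proof. intros H. apply IZR_le in H. nra. Qed.

Lemma scale_lt_inv z w : b * IZR z < b * IZR w -> (z < w)%Z.
Proof.
  intros H. destruct (Z_lt_le_dec z w) as [Hlt|Hle]; auto.
  apply scale_le in Hle. lra.
Qed.

Lemma b_le_Nb : b <= IZR N * b.
Proof. assert (1 <= IZR N) by (apply IZR_le; lia). nra. Qed.

Ltac push_IZR := repeat rewrite ?plus_IZR, ?minus_IZR in *.

(* Distinct columns of a solution are at least N apart: the row starting in
   (b p - a, b p] would contain both. *)
Lemma solution_gap x p q : solution x -> x p = true -> x q = true ->
  (p < q <= p + N - 1)%Z -> False.
Proof.
  intros Hx Hp Hq Hpq.
  destruct (row_offset_dense (b * IZR p - a)) as [k Hk].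
  assert (p = q); [|lia].
  pose proof b_le_Nb.
  assert (Hp1 : b * IZR (p + 1) <= b * IZR q) by (apply scale_le; lia).
  assert (HqN : b * IZR q <= b * IZR (p + N - 1)) by (apply scale_le; lia).
  push_IZR.
  apply (solution_unique x k); auto; apply window_iff; lra.
Qed.

Lemma solution_above x p : solution x -> exists r, x r = true /\ (p < r <= p + N + 1)%Z.
Proof.
  intros Hx. destruct (row_offset_dense (b * IZR p)) as [k Hk].
  destruct (solution_hits x k Hx) as (r & Hr & Wr). apply window_iff in Wr.
  exists r. split; auto. split.
  - apply scale_lt_inv. lra.
  - assert (r < p + N + 2)%Z; [|lia]. apply scale_lt_inv. push_IZR. lra.
Qed.

Lemma solution_below x p : solution x -> exists r, x r = true /\ (p - N - 1 <= r < p)%Z.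
Proof.
  intros Hx. destruct (row_offset_dense (b * IZR p - c - a)) as [k Hk].
  destruct (solution_hits x k Hx) as (r & Hr & Wr). apply window_iff in Wr.
  exists r. split; auto. split.
  - assert (p - N - 2 < r)%Z; [|lia]. apply scale_lt_inv. push_IZR. lra.
  - apply scale_lt_inv. lra.
Qed.

Lemma solution_next x p : solution x -> x p = true -> exists q, consecutive x p q.
Proof.
  intros Hx Hp. destruct (solution_above x p Hx) as (r & Hr & Hpr).
  destruct (next_exists x p r Hp Hr) as (q & Hq & _); [lia|]. eauto.
Qed.

Lemma solution_prev x q : solution x -> x q = true -> exists p, consecutive x p q.
Proof.
  intros Hx Hq. destruct (solution_below x q Hx) as (r & Hr & Hrq).
  destruct (prev_exists x r q Hr Hq) as (p & Hp & _); [lia|]. eauto.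
Qed.

(* The gap after column p is N or N + 1, and it is determined by which of two
   adjacent intervals of total length b is free of row offsets. *)
Lemma solution_step x p q : solution x -> consecutive x p q ->
  (q = (p + N)%Z /\ no_row_offset (b * IZR p - c0) (b * IZR p)) \/
  (q = (p + N + 1)%Z /\ no_row_offset (b * IZR p) (b * IZR p + b - c0)).
Proof.
  intros Hx Hcons. pose proof Hcons as (Hp & Hq & Hpq & Hgap).
  assert (HqN : (p + N <= q)%Z).
  { destruct (Z_lt_le_dec q (p + N)) as [Hlt|]; auto.
    exfalso. apply (solution_gap x p q); auto; lia. }
  assert (HqN1 : (q <= p + N + 1)%Z).
  { destruct (solution_above x p Hx) as (r & Hr & Hpr).
    destruct (Z_lt_le_dec r q) as [Hrq|]; [|lia].
    rewrite Hgap in Hr by lia. discriminate. }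
  destruct (Z.eq_dec q (p + N)) as [E|E]; [left|right]; (split; [lia|]); intros k Hk.
  - subst q. assert (p = (p + N)%Z); [|lia].
    pose proof b_le_Nb. push_IZR.
    apply (solution_unique x k); auto; apply window_iff; push_IZR; lra.
  - destruct (solution_hits x k Hx) as (r & Hr & Wr). apply window_iff in Wr.
    assert (p < r)%Z by (apply scale_lt_inv; lra).
    assert (r < p + N + 1)%Z by (apply scale_lt_inv; push_IZR; lra).
    rewrite Hgap in Hr by lia. discriminate.
Qed.

Lemma next_determined x y p q q' : solution x -> solution y ->
  consecutive x p q -> consecutive y p q' -> q = q'.
Proof.
  intros Hx Hy Hq Hq'.
  destruct (solution_step x p q Hx Hq) as [[E1 F1]|[E1 F1]];
  destruct (solution_step y p q' Hy Hq') as [[E2 F2]|[E2 F2]]; try lia; exfalso;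
  [pose proof (no_row_offset_short _ _ _ F1 F2) | pose proof (no_row_offset_short _ _ _ F2 F1)];
  lra.
Qed.

(* Likewise for the predecessor: gaps N + 1 after p and N after p + 1 would
   need two adjacent offset-free intervals of total length b > a. *)
Lemma prev_determined x y p p' q : solution x -> solution y ->
  consecutive x p q -> consecutive y p' q -> p = p'.
Proof.
  intros Hx Hy Hp Hp'.
  assert (Hadj : forall u, no_row_offset (b * IZR u) (b * IZR u + b - c0) ->
            no_row_offset (b * IZR (u + 1) - c0) (b * IZR (u + 1)) -> False).
  { intros u F1 F2. rewrite plus_IZR in F2.
    replace (b * (IZR u + 1) - c0) with (b * IZR u + b - c0) in F2 by ring.
    pose proof (no_row_offset_short _ _ _ F1 F2). lra. }
  destruct (solution_step x p q Hx Hp) as [[E1 F1]|[E1 F1]];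
  destruct (solution_step y p' q Hy Hp') as [[E2 F2]|[E2 F2]]; try lia; exfalso.
  - replace p with (p' + 1)%Z in F1 by lia. exact (Hadj p' F2 F1).
  - replace p' with (p + 1)%Z in F2 by lia. exact (Hadj p F1 F2).
Qed.

(* A solution through 0 and a solution avoiding 0 are disjoint, hence
   their union witnesses t in D. *)
Lemma Dset_of_solutions x1 x2 : solution x1 -> solution x2 ->
  x1 0%Z = true -> x2 0%Z = false -> Dset a b c t.
Proof.
  intros H1 H2 H10 H20.
  exists (fun j => orb (x1 j) (x2 j)). split; [rewrite H10; auto|].
  apply Mx_const_union; auto.
  intros p Hp1 Hp2.
  enough (x2 0%Z = true) by congruence.
  apply (shared_point_propagates x1 x2) with p; auto.
  - intros u Hu. exact (solution_next x2 u H2 Hu).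
  - intros u Hu. exact (solution_prev x2 u H2 Hu).
  - intros u v v'. exact (next_determined x1 x2 u v v' H1 H2).
  - intros u u' v. exact (prev_determined x1 x2 u u' v H1 H2).
Qed.

(* D is contained in the right-hand side: the even part of a witness is a
   solution through 0, the first entry q > 0 of the witness lies in its odd
   part, and q = N happens only when the gap after 0 is N + 1. *)
Lemma Dset_decompose : Dset a b c t ->
  (Sset a b c t
   /\ (exists k : Z, 0 <= t - a * IZR k /\ t - a * IZR k < c0 + a - b)
   /\ Sset a b c (t + IZR N * b))
  \/
  (Sset a b c t
   /\ exists j : Z, (1 <= j)%Z /\ (j <= N - 1)%Z /\ Sset a b c (t + b * IZR j)).
Proof.
  intros [x [Hx0 Hx]].
  assert (Heven : solution (parity_part x true)) by (apply Mx_const_parity_part; auto; lra).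
  assert (Hodd : solution (parity_part x false)) by (apply Mx_const_parity_part; auto; lra).
  assert (Heven0 : parity_part x true 0%Z = true) by (unfold parity_part; rewrite Hx0; auto).
  assert (HS : Sset a b c t) by (exists (parity_part x true); auto).
  destruct (solution_next _ 0%Z Heven Heven0) as [m Hm].
  assert (Hxm : x m = true).
  { destruct Hm as (_ & Hm & _). apply andb_prop in Hm. tauto. }
  destruct (next_exists x 0%Z m Hx0 Hxm) as (q & Hq & Hqm); [destruct Hm as (_ & _ & ? & _); lia|].
  assert (Hrq : rank x q = 1%Z) by (rewrite (rank_next x 0 q Hq); reflexivity).
  destruct Hq as (_ & Hxq & Hq0 & _).
  assert (Hoddq : parity_part x false q = true) by (unfold parity_part; rewrite Hxq, Hrq; auto).
  assert (Hqm' : q <> m).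
  { intros ->. destruct Hm as (_ & Hm & _). unfold parity_part in Hm.
    rewrite Hrq, Hxm in Hm. discriminate. }
  assert (HSq : Sset a b c (t + b * IZR q)) by (apply Sset_shift; eauto).
  destruct (solution_step _ 0%Z m Heven Hm) as [[Em _]|[Em Hfree]].
  - right. split; auto. exists q. repeat split; auto; lia.
  - destruct (Z_lt_le_dec q N) as [HqN|HqN].
    + right. split; auto. exists q. repeat split; auto; lia.
    + left. assert (q = N) as -> by lia.
      split; [auto|split; [|rewrite Rmult_comm; auto]].
      destruct (row_offset_dense (b - c0 - a)) as [k Hk]. exists k.
      specialize (Hfree k). lra.
Qed.

(* The right-hand side is contained in D: in both cases the shifted solution
   avoids column 0 (0 is within N - 1 of column j, resp. the row k with
   0 <= t - a k < c0 + a - b would contain both columns 0 and N). *)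
Lemma Dset_compose :
  (Sset a b c t
   /\ (exists k : Z, 0 <= t - a * IZR k /\ t - a * IZR k < c0 + a - b)
   /\ Sset a b c (t + IZR N * b))
  \/
  (Sset a b c t
   /\ exists j : Z, (1 <= j)%Z /\ (j <= N - 1)%Z /\ Sset a b c (t + b * IZR j))
  -> Dset a b c t.
Proof.
  intros [([x1 [H10 H1]] & [k Hk] & HS) | ([x1 [H10 H1]] & j & Hj1 & HjN & HS)].
  - rewrite Rmult_comm in HS. apply Sset_shift in HS as (x2 & H2 & H2N).
    apply (Dset_of_solutions x1 x2); auto.
    destruct (x2 0%Z) eqn:H20; auto. exfalso.
    assert (0%Z = N); [|lia].
    pose proof b_le_Nb.
    apply (solution_unique x2 k); auto; apply window_iff; lra.
  - apply Sset_shift in HS as (x2 & H2 & H2j).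
    apply (Dset_of_solutions x1 x2); auto.
    destruct (x2 0%Z) eqn:H20; auto. exfalso.
    apply (solution_gap x2 0 j); auto; lia.
Qed.
End Geometry.

(* Theorem 4.2, with N = floor(c/b) >= 1 since c - N b < a < c. *)
Theorem theorem4p2 (a b c : R) (ha : 0 < a) (hb : 0 < b) (hc : 0 < c)
  (hab : a < b) (hbc : b < c)
  (hc0l : b - a < c - IZR (Int_part (c / b)) * b)
  (hc0r : c - IZR (Int_part (c / b)) * b < a) :
  forall t : R,
    Dset a b c t <->
    ((Sset a b c t
      /\ (exists k : Z, 0 <= t - a * IZR k
                        /\ t - a * IZR k < (c - IZR (Int_part (c / b)) * b) + a - b)
      /\ Sset a b c (t + IZR (Int_part (c / b)) * b))
     \/
     (Sset a b c t
      /\ exists j : Z, (1 <= j)%Z /\ (j <= Int_part (c / b) - 1)%Z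
                       /\ Sset a b c (t + b * IZR j))).
Proof.
  intros t.
  set (N := Int_part (c / b)) in *.
  assert (hN : (1 <= N)%Z).
  { destruct (Z_lt_le_dec N 1) as [HN|HN]; auto. exfalso.
    assert (IZR N <= 0) by (apply IZR_le; lia). nra. }
  assert (hcN : c = IZR N * b + (c - IZR N * b)) by ring.
  split.
  - exact (Dset_decompose a b c _ N t ha hab hN hcN hc0l hc0r).
  - exact (Dset_compose a b c _ N t ha hab hN hcN hc0l hc0r).
Qed.
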